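(* Let $q$ be a prime power, $k,b$ positive integers, and $\boldsymbol{x},\boldsymbol{y}\in\mathbb{F}_q^k$ with $0<d_b(\boldsymbol{x},\boldsymbol{y})<k$. Then $d_{b+1}(\boldsymbol{x},\boldsymbol{y})\ge d_b(\boldsymbol{x},\boldsymbol{y})+1$.
   Context: For $\boldsymbol{x}=(x_0,\ldots,x_{k-1})$, $\boldsymbol{y}=(y_0,\ldots,y_{k-1})\in\mathbb{F}_q^k$ and a positive integer $c$, the $c$-symbol distance $d_c(\boldsymbol{x},\boldsymbol{y})$ is the number of indices $i\in\{0,\ldots,k-1\}$ with $(x_i,x_{i+1},\ldots,x_{i+c-1})\ne(y_i,y_{i+1},\ldots,y_{i+c-1})$, indices taken modulo $k$. *)

From mathcomp Require Import all_boot all_algebra all_field.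
Set Implicit Arguments. Unset Strict Implicit. Unset Printing Implicit Defensive.

(* Vectors of F_q^k are represented as {ffun 'I_k -> F} with F a finite field
   (so |F| = q is a prime power). *)

(* cyclic index: x_{n mod k} for a vector of length k (when k = 0 the
   vector type is empty-indexed, we return the default value). *)
Definition cidx {F : Type} (k : nat) (x : {ffun 'I_k -> F}) (d : F) (n : nat) : F :=
  match k as m return {ffun 'I_m -> F} -> F with
  | 0 => fun _ => d
  | m.+1 => fun y => y (inord (n %% m.+1))
  end x.

Definition csym {F : finFieldType} (k c : nat) (x : {ffun 'I_k -> F}) (i : nat) : seq F :=
  [seq cidx x 0%R (i + j) | j <- iota 0 c].

Definition csym_dist {F : finFieldType} (k c : nat) (x y : {ffun 'I_k -> F}) : nat :=
  #|[set i : 'I_k | csym c x i != csym c y i]|.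

(* Appending a symbol to every window keeps a difference at position i and
   catches one at position i + 1, so the set of differing b-symbols is
   contained in the set of differing (b+1)-symbols.  When that set is neither
   empty nor everything, going around the cycle there is an index i at which
   the b-symbols agree while those at i + 1 differ: i is a new difference of
   the (b+1)-symbols, so the inclusion is strict. *)

From mathcomp Require Import all_boot all_algebra all_field.

Lemma cidx_modn (T : Type) k (x : {ffun 'I_k -> T}) d n :
  cidx x d (n %% k) = cidx x d n.
Proof. by case: k x => [|m] x //=; rewrite modn_mod. Qed.

Section CyclicSymbols.

Context {F : finFieldType} {k : nat}.
Implicit Types (x y : {ffun 'I_k -> F}) (c i : nat).

Lemma csym_modn c x i : csym c x (i %% k) = csym c x i.
Proof. by apply: eq_map => j; rewrite -cidx_modn modnDml cidx_modn. Qed.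

Lemma csymSr c x i : csym c.+1 x i = rcons (csym c x i) (cidx x 0%R (i + c)).
Proof. by rewrite /csym -addn1 iotaD map_cat cats1 add0n. Qed.

Lemma csymS c x i : csym c.+1 x i = cidx x 0%R i :: csym c x i.+1.
Proof.
rewrite /csym /= addn0 (iotaDl 1 0) -map_comp.
by congr (_ :: _); apply: eq_map => j /=; rewrite addnA addn1.
Qed.

Lemma csymS_neq c x y i :
  (csym c x i != csym c y i) || (csym c x i.+1 != csym c y i.+1) ->
  csym c.+1 x i != csym c.+1 y i.
Proof.
apply: contraL => /eqP eq_xy; rewrite negb_or !negbK.
apply/andP; split; apply/eqP.
  by move: eq_xy; rewrite !csymSr => /rcons_inj [].
by move: eq_xy; rewrite !csymS => -[].
Qed.

Lemma csym_dist_ltS c x y i : 0 < k ->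
  csym c x i = csym c y i -> csym c x i.+1 != csym c y i.+1 ->
  csym_dist c x y < csym_dist c.+1 x y.
Proof.
move=> k_gt0 eq_i neq_i1; apply/proper_card/properP; split.
  by apply/subsetP => j; rewrite !inE => neq_j; apply: csymS_neq; rewrite neq_j.
exists (Ordinal (ltn_pmod i k_gt0)); rewrite !inE /= !csym_modn ?eq_i ?eqxx //.
by apply: csymS_neq; rewrite neq_i1 orbT.
Qed.

Lemma csym_eq_of_dist_lt c x y :
  csym_dist c x y < k -> exists m : 'I_k, csym c x m = csym c y m.
Proof.
move=> lt_dist_k.
suff /existsP [m /eqP] : [exists m : 'I_k, csym c x m == csym c y m] by exists m.
apply: contraLR lt_dist_k.
rewrite negb_exists => /forallP neq_all.
rewrite -leqNgt /csym_dist (_ : [set _ | _] = setT) ?cardsT ?card_ord //.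
by apply/setP => i; rewrite !inE; apply: neq_all.
Qed.

End CyclicSymbols.

Lemma exists_rise (D : pred nat) m n :
  m <= n -> ~~ D m -> D n -> exists i, ~~ D i && D i.+1.
Proof.
elim: n => [|n IHn]; first by rewrite leqn0 => /eqP -> /negPf ->.
rewrite leq_eqVlt => /orP [/eqP -> /negPf -> // | le_mn Dm Dn1].
by case Dn: (D n); [exact: IHn | exists n; rewrite Dn].
Qed.

Theorem proposition2p1 (F : finFieldType) (k b : nat) (x y : {ffun 'I_k -> F}) :
  0 < k -> 0 < b ->
  0 < csym_dist b x y -> csym_dist b x y < k ->
  csym_dist b.+1 x y >= (csym_dist b x y).+1.
Proof.
move=> k_gt0 _ /card_gt0P [j]; rewrite inE => neq_j /csym_eq_of_dist_lt [m eq_m].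
have [i /andP [/negbNE/eqP eq_i neq_i1]] :
    exists i, ~~ (csym b x i != csym b y i) && (csym b x i.+1 != csym b y i.+1).
  apply: (@exists_rise (fun i => csym b x i != csym b y i) m (j + k)) => /=.
  - by rewrite (leq_trans (ltnW (ltn_ord m))) ?leq_addl.
  - by rewrite eq_m eqxx.
  - by rewrite -![csym _ _ (j + k)]csym_modn modnDr modn_small.
exact: csym_dist_ltS eq_i neq_i1.
Qed.
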